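(* Let $q,q',n$ be integers with $q'\ge 2q+1>4$ and $n>1$. Let $S$ be an $\mathcal{OS}_q(n)$ of period $m$ with ring sequence $[s_0,\ldots,s_{m-1}]$ where $s_0=0$. For $x\in\mathbb{Z}_q$ let $x'$ denote the class in $\mathbb{Z}_{q'}$ of the integer in $\{0,\ldots,q-1\}$ representing $x$. Let $S''$ be the sequence over $\mathbb{Z}_{q'}$ with ring sequence $[s_0',\ldots,s_{m-1}',-s_0',\ldots,-s_{m-1}']$. Define $t_i=(-1)^{i+m-1}s_i'$ if $s_i'\neq0$ and $t_i=(-1)^{i+m-1}q$ if $s_i'=0$ ($0\le i\le m-1$), and let $T'$ be the sequence over $\mathbb{Z}_{q'}$ with ring sequence $[t_0,\ldots,t_{m-1},-t_0,\ldots,-t_{m-1}]$. Then $S''$ and $T'$ are s-disjoint.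
   Context: For a periodic sequence $S=(s_i)$ write $\mathbf{s}_n(i)=(s_i,\ldots,s_{i+n-1})$; $\mathbf{u}^R$ is the reverse of a tuple and $-\mathbf{u}$ its termwise negative. An $n$-window sequence of period $m$ satisfies $\mathbf{s}_n(i)=\mathbf{s}_n(j)\Rightarrow i\equiv j\pmod m$; an $\mathcal{OS}_q(n)$ is a $q$-ary $n$-window sequence with $\mathbf{s}_n(i)\neq\mathbf{s}_n(j)^R$ for all $i,j$. The ring sequence of a sequence of period $m$ is one period. Two $n$-window sequences $S=(s_i)$, $T=(t_i)$ are s-disjoint if for all $i,j$: $\mathbf{s}_n(i)\neq\mathbf{t}_n(j)$, $\mathbf{s}_n(i)\neq\mathbf{t}_n(j)^R$ and $\mathbf{s}_n(i)\neq-\mathbf{t}_n(j)^R$. *)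

From mathcomp Require Import all_boot all_order all_algebra.
Set Implicit Arguments. Unset Strict Implicit. Unset Printing Implicit Defensive.
Import GRing.Theory.
Local Open Scope ring_scope.

(* The periodic sequence (indexed by nat) whose ring sequence (one period) is r. *)
Definition seq_of (T : zmodType) (r : seq T) (i : nat) : T := nth 0 r (i %% size r).

Definition window (T : Type) (s : nat -> T) (n i : nat) : seq T :=
  [seq s (i + k)%N | k <- iota 0 n].

Definition n_window (T : eqType) (s : nat -> T) (n m : nat) : Prop :=
  forall i j : nat, window s n i = window s n j -> i = j %[mod m].

(* OS_q(n) given by its ring sequence r (period m = size r) *)
Definition is_OS (T : zmodType) (n : nat) (r : seq T) : Prop :=
  n_window (seq_of r) n (size r) /\
  forall i j : nat, window (seq_of r) n i <> rev (window (seq_of r) n j).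

Definition s_disjoint (T : zmodType) (n : nat) (s t : nat -> T) : Prop :=
  forall i j : nat,
    [/\ window s n i <> window t n j,
        window s n i <> rev (window t n j) &
        window s n i <> map (fun x => - x) (rev (window t n j))].

Definition liftZ (q q' : nat) (x : 'Z_q) : 'Z_q' := (nat_of_ord x)%:R.

Definition tseq (q q' : nat) (r' : seq 'Z_q') : seq 'Z_q' :=
  [seq (-1) ^+ (i + size r' - 1)%N * (if r'`_i != 0 then r'`_i else q%:R)
  | i <- iota 0 (size r')].

From mathcomp Require Import all_boot all_order all_algebra.
From mathcomp Require Import zify.
Import GRing.Theory.
Local Open Scope ring_scope.

Set Implicit Arguments.
Unset Strict Implicit.
Unset Printing Implicit Defensive.

(* Call a residue of [Z_q'] small when its representative is below [q].
   Consecutive entries of [S''] are either both small or both negatives of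
   small residues: the two halves of [S''] consist of small residues and of
   their negatives, and [S''] passes through [s_0' = 0] at both junctions.
   Consecutive entries of [T'] alternate in sign: one of them has a non-small
   negative and the other is not small, because [t_i] is [+-s_i'] with
   [s_i' <> 0] small, or [+-q], which is neither small nor the negative of a
   small residue as [q' >= 2q].  These two patterns exclude each other and are
   stable under reversal and negation, so already the first two entries of
   windows of [S''] and [T'] differ. *)

Definition consecutive (T : Type) (P : rel T) (s : nat -> T) : Prop :=
  forall i, P (s i) (s i.+1).

Section SignPatterns.
Variables (V : zmodType) (L : pred V).

Definition sign_coherent : rel V :=
  fun x y => (L x && L y) || (L (- x) && L (- y)).

Definition sign_alternating : rel V :=
  fun x y => (~~ L (- x) && ~~ L y) || (~~ L x && ~~ L (- y)).

Lemma sign_coherentN x y : sign_coherent (- x) (- y) = sign_coherent x y.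
Proof. by rewrite /sign_coherent !opprK orbC. Qed.

Lemma sign_alternatingN x y : sign_alternating (- x) (- y) = sign_alternating x y.
Proof. by rewrite /sign_alternating !opprK orbC. Qed.

Lemma sign_alternatingC x y : sign_alternating x y = sign_alternating y x.
Proof.
by rewrite /sign_alternating; case: (L x) (L y) (L (- x)) (L (- y)) => [] [] [] [].
Qed.

Lemma sign_coherent_alternating x y :
  sign_coherent x y -> ~~ sign_alternating x y.
Proof.
rewrite /sign_coherent /sign_alternating.
by case: (L x) (L y) (L (- x)) (L (- y)) => [] [] [] [].
Qed.

Lemma s_disjoint_coherent_alternating n (s t : nat -> V) : (1 < n)%N ->
  consecutive sign_coherent s -> consecutive sign_alternating t ->
  s_disjoint n s t.
Proof.
move=> n_gt1 coh_s alt_t i j.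
have size_win w k : size (window w n k) = n by rewrite size_map size_iota.
have nth_win w k l : (l < n)%N -> nth 0 (window w n k) l = w (k + l)%N.
  by move=> ln; rewrite (nth_map 0%N) ?size_iota // nth_iota.
pose a := (j + (n - 2))%N.
have [rev_t0 rev_t1] : nth 0 (rev (window t n j)) 0 = t a.+1 /\
                       nth 0 (rev (window t n j)) 1 = t a.
  by rewrite !nth_rev ?size_win ?nth_win; try lia; split; congr t; lia.
have first_two w : window s n i = w -> s i = nth 0 w 0 /\ s i.+1 = nth 0 w 1.
  by move=> <-; rewrite !nth_win ?addn0 ?addn1 //; lia.
have not_alt x y : s i = x -> s i.+1 = y -> ~~ sign_alternating x y.
  by move=> <- <-; apply/sign_coherent_alternating/coh_s.
split=> /first_two[].
- rewrite !nth_win ?addn0 ?addn1; try lia.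
  by move=> /not_alt/[apply]; rewrite alt_t.
- by rewrite rev_t0 rev_t1 => /not_alt/[apply]; rewrite sign_alternatingC alt_t.
- rewrite !(nth_map (0 : V)) ?size_rev ?size_win //; try lia.
  rewrite rev_t0 rev_t1 => /not_alt/[apply].
  by rewrite sign_alternatingN sign_alternatingC alt_t.
Qed.

Lemma consecutive_seq_of (P : rel V) (r : seq V) : (0 < size r)%N ->
  (forall k, (k < size r)%N -> P r`_k r`_(k.+1 %% size r)) ->
  consecutive P (seq_of r).
Proof. by move=> r_gt0 Pr i; rewrite /seq_of -addn1 -modnDml addn1; apply/Pr/ltn_pmod. Qed.

Lemma consecutive_cat_opp (P : rel V) (r : seq V) :
  (forall x y, P (- x) (- y) = P x y) -> (0 < size r)%N ->
  (forall k, (k.+1 < size r)%N -> P r`_k r`_k.+1) -> P r`_(size r).-1 (- r`_0) ->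
  consecutive P (seq_of (r ++ map (fun x => - x) r)).
Proof.
move=> PN r_gt0 Pr Pr_last; set m := size r in r_gt0 Pr Pr_last.
apply: consecutive_seq_of => [|k]; rewrite size_cat size_map -/m; first lia.
have nth_w l : (l < m + m)%N ->
    (r ++ map (fun x => - x) r)`_l = if (l < m)%N then r`_l else - r`_(l - m).
  move=> l_lt; rewrite nth_cat -/m; case: ifP => // /negbT; rewrite -leqNgt => ?.
  by rewrite (nth_map (0 : V)) //; lia.
move=> k_lt; case: (ltnP k.+1 (m + m)) => [k1_lt | k1_ge].
  rewrite modn_small // !nth_w //; case: (ltnP k.+1 m) => [k1_lt_m | k1_ge_m].
    by rewrite ltnW //; apply: Pr.
  case: (ltnP k m) => [k_lt_m | k_ge_m].
    have -> : (k.+1 - m = 0)%N by lia.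
    by have -> : k = m.-1 by lia.
  rewrite PN (_ : (k.+1 - m = (k - m).+1)%N); last by lia.
  by apply: Pr; lia.
have k_last : k = (m + m).-1 by lia.
rewrite k_last prednK ?modnn ?nth_w; try lia.
rewrite ltn_geF; last by lia.
rewrite r_gt0 -[r`_0]opprK PN.
by have -> : ((m + m).-1 - m = m.-1)%N by lia.
Qed.

End SignPatterns.

Section SignedSequences.
Variables (R : pzRingType) (L : pred R).

Lemma sign_alternating_signr e u v : ~~ L (- u) -> ~~ L (- v) ->
  sign_alternating L ((-1) ^+ e * u) ((-1) ^+ e.+1 * v).
Proof.
rewrite exprS mulN1r mulNr -signr_odd /sign_alternating => Nu Nv.
by case: (odd e); rewrite ?expr0 ?expr1 ?mul1r ?mulN1r ?opprK Nu Nv ?orbT.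
Qed.

Lemma sign_alternating_signr_big e e' u v : ~~ L (- u) -> ~~ L v -> ~~ L (- v) ->
  sign_alternating L ((-1) ^+ e * u) ((-1) ^+ e' * v).
Proof.
rewrite -signr_odd -(signr_odd _ e') /sign_alternating => Nu Nv Nv'.
by case: (odd e); case: (odd e');
  rewrite ?expr0 ?expr1 ?mul1r ?mulN1r ?opprK Nu Nv Nv' ?orbT.
Qed.

End SignedSequences.

Lemma val_ZpN p (x : 'Z_p) : (1 < p)%N -> (- x : 'Z_p) = ((p - x) %% p)%N :> nat.
Proof. by case: p x => [|[|p]]. Qed.

Definition small_residue (q : nat) {p : nat} : pred 'Z_p := fun x => (x < q)%N.

Section SmallResidues.
Variables (q p : nat).
Hypotheses (q_gt1 : (1 < q)%N) (q2_le_p : (2 * q <= p)%N).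
Local Notation small := (@small_residue q p).

Let p_gt1 : (1 < p)%N. Proof. lia. Qed.

Lemma small_residue0 : small 0.
Proof. by rewrite /small_residue /=; lia. Qed.

Lemma small_liftZ (x : 'Z_q) : small (@liftZ q p x).
Proof.
rewrite /small_residue /liftZ val_Zp_nat //.
have := ltn_ord x; move: (nat_of_ord x) => v; rewrite Zp_cast // => v_lt_q.
by rewrite modn_small //; lia.
Qed.

Lemma small_residueN (x : 'Z_p) : small x -> x != 0 -> ~~ small (- x).
Proof.
rewrite /small_residue val_ZpN // => x_lt_q x_neq0.
have x_gt0 : (0 < x)%N by rewrite lt0n.
by rewrite modn_small; lia.
Qed.

Lemma not_small_q : ~~ small q%:R /\ ~~ small (- q%:R).
Proof.
have val_q : ((q%:R : 'Z_p) : nat) = q by rewrite val_Zp_nat // modn_small //; lia.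
by rewrite /small_residue val_ZpN // val_q modn_small; lia.
Qed.

Lemma size_tseq (r : seq 'Z_p) : size (tseq q r) = size r.
Proof. by rewrite size_map size_iota. Qed.

Lemma nth_tseq (r : seq 'Z_p) k : (k < size r)%N ->
  (tseq q r)`_k = (-1) ^+ (k + size r - 1) * (if r`_k != 0 then r`_k else q%:R).
Proof. by move=> k_lt; rewrite (nth_map 0%N) ?size_iota // nth_iota. Qed.

Lemma consecutive_coherent_cat_opp (r : seq 'Z_p) :
  (0 < size r)%N -> all small r -> r`_0 = 0 ->
  consecutive (sign_coherent small) (seq_of (r ++ map (fun x => - x) r)).
Proof.
move=> r_gt0 /all_nthP small_r r0.
apply: consecutive_cat_opp => // [x y | k k_lt | ]; first exact: sign_coherentN.
  by rewrite /sign_coherent !small_r // ltnW.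
by rewrite /sign_coherent r0 oppr0 small_residue0 small_r // ltn_predL.
Qed.

Lemma consecutive_alternating_tseq (r : seq 'Z_p) :
  (0 < size r)%N -> all small r -> r`_0 = 0 ->
  consecutive (sign_alternating small)
    (seq_of (tseq q r ++ map (fun x => - x) (tseq q r))).
Proof.
move=> r_gt0 /all_nthP small_r r0.
have [q_not_small Nq_not_small] := not_small_q.
have Nu_not_small k : (k < size r)%N -> ~~ small (- if r`_k != 0 then r`_k else q%:R).
  by case: ifP => // r_neq0 k_lt; apply: small_residueN; rewrite ?r_neq0 ?small_r.
apply: consecutive_cat_opp => [x y | | k | ]; rewrite ?size_tseq //.
- exact: sign_alternatingN.
- move=> k_lt; rewrite !nth_tseq; try lia.
  rewrite (_ : (k.+1 + size r - 1 = (k + size r - 1).+1)%N); last by lia.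
  by apply: sign_alternating_signr; apply: Nu_not_small; lia.
rewrite !nth_tseq ?ltn_predL // r0 eqxx /= -mulNr.
rewrite (_ : - (-1) ^+ _ = (-1) ^+ (size r - 1).+1); last by rewrite exprS mulN1r.
by apply: sign_alternating_signr_big => //; apply: Nu_not_small; rewrite ltn_predL.
Qed.

End SmallResidues.

Theorem corollary3p17 (q q' n : nat) (r : seq 'Z_q) :
  (2 * q + 1 <= q')%N -> (4 < 2 * q + 1)%N -> (1 < n)%N ->
  (0 < size r)%N -> is_OS n r -> r`_0 = 0 ->
  let r' := map (@liftZ q q') r in
  let t := tseq q r' in
  s_disjoint n (seq_of (r' ++ map (fun x => - x) r'))
               (seq_of (t ++ map (fun x => - x) t)).
Proof.
move=> q'_ge q_gt2 n_gt1 r_gt0 _ r0 r' t.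
have q_gt1 : (1 < q)%N by lia.
have q2_le_q' : (2 * q <= q')%N by lia.
have r'_gt0 : (0 < size r')%N by rewrite size_map.
have small_r' : all (small_residue q) r'.
  by apply/allP => _ /mapP[x _ ->]; apply: small_liftZ.
have r'0 : r'`_0 = 0 by rewrite (nth_map 0) // r0.
apply: (s_disjoint_coherent_alternating (L := small_residue q)) => //.
  exact: consecutive_coherent_cat_opp.
exact: consecutive_alternating_tseq.
Qed.
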